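(* Let $n_1,\dots,n_m$ be positive integers, $w=n_1+\dots+n_m$, and $x_1,\dots,x_m\in\mathbb C$ with $|x_i|<1$. Then $$\mathrm{Li}_{n_1,\dots,n_m}(x_1,\dots,x_m)=\int_{C_w}\Omega_{n_1,\dots,n_m}(x_1,\dots,x_m).$$
   Context: $\mathrm{Li}_{n_1,\dots,n_m}(x_1,\dots,x_m)=\sum_{0<k_1<\dots<k_m}\frac{x_1^{k_1}\cdots x_m^{k_m}}{k_1^{n_1}\cdots k_m^{n_m}}$. Put $N_k=n_1+\dots+n_k$ ($N_0=0$). Let $u_1,\dots,u_w$ be coordinates on $\mathbb A^w$ and $C_w=[0,1]^w$ the standard cube in the $u$-coordinates with its standard orientation. Define $v_j=x_ku_j$ if $j=N_k$ for some $k\ge1$, and $v_j=u_j$ otherwise. For $1\le j\le w$ put $P_j=v_jv_{j+1}\cdots v_w$. Then $\Omega_{n_1,\dots,n_m}(x_1,\dots,x_m)=\eta_1\wedge\eta_2\wedge\cdots\wedge\eta_w$, where $\eta_j=\frac{dP_j}{1-P_j}$ if $j=N_k+1$ for some $k\in\{0,\dots,m-1\}$ (the first index of a block) and $\eta_j=\frac{dP_j}{P_j}$ otherwise; the integral over $C_w$ is the integral of the pullback of this form under $u\mapsto v$. (E.g. for $m=1,n_1=2$: $\Omega_2(x)=\frac{d(v_1v_2)}{1-v_1v_2}\wedge\frac{dv_2}{v_2}$ with $v_1=u_1,v_2=xu_2$.) *)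

From Stdlib Require Import Reals Arith List.
From Coquelicot Require Export Coquelicot.
Open Scope R_scope.

(* Li_trunc ns xs a K = sum over a < k_1 < ... < k_m <= K of
   prod_i x_i^{k_i} / k_i^{n_i}   (with ns = [n_1..n_m], xs = [x_1..x_m]). *)
Fixpoint Li_trunc (ns : list nat) (xs : list C) (a K : nat) : C :=
  match ns, xs with
  | n :: ns', x :: xs' =>
      sum_n_m (fun k : nat =>
                 Cmult (Cdiv (pow_n x k) (RtoC (INR k ^ n))) (Li_trunc ns' xs' k K))
              (S a) K
  | _, _ => RtoC 1
  end.

Definition is_Li (ns : list nat) (xs : list C) (l : C) : Prop :=
  filterlim (fun K => Li_trunc ns xs 0 K) eventually (locally l).

Definition weight (ns : list nat) : nat := list_sum ns.

(* multiplier c_j : v_j = c_j u_j, with c_j = x_k if j = N_k (k >= 1), else 1;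
   off is the running partial sum N_{k-1}. *)
Fixpoint cmult_aux (ns : list nat) (xs : list C) (off j : nat) : C :=
  match ns, xs with
  | n :: ns', x :: xs' =>
      if Nat.eqb j (off + n) then x else cmult_aux ns' xs' (off + n) j
  | _, _ => RtoC 1
  end.
Definition cmult (ns : list nat) (xs : list C) (j : nat) : C := cmult_aux ns xs 0 j.

(* j is the first index of a block: j = N_k + 1 for some k in {0..m-1} *)
Fixpoint is_start_aux (ns : list nat) (off j : nat) : bool :=
  match ns with
  | n :: ns' => Nat.eqb j (off + 1) || is_start_aux ns' (off + n) j
  | nil => false
  end.
Definition is_start (ns : list nat) (j : nat) : bool := is_start_aux ns 0 j.

(* u : nat -> R are the coordinates u_1, ..., u_w (1-based). *)
Definition vcoord (ns : list nat) (xs : list C) (u : nat -> R) (j : nat) : C :=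
  Cmult (cmult ns xs j) (RtoC (u j)).

Fixpoint cprod (f : nat -> C) (a len : nat) : C :=
  match len with
  | O => RtoC 1
  | S len' => Cmult (f a) (cprod f (S a) len')
  end.

Definition Pj (ns : list nat) (xs : list C) (j : nat) (u : nat -> R) : C :=
  cprod (vcoord ns xs u) j (weight ns + 1 - j).

Definition upd (u : nat -> R) (i : nat) (t : R) : nat -> R :=
  fun k => if Nat.eqb k i then t else u k.

Definition pderiv (f : (nat -> R) -> C) (u : nat -> R) (i : nat) : C :=
  (Derive (fun t => fst (f (upd u i t))) (u i),
   Derive (fun t => snd (f (upd u i t))) (u i)).

Fixpoint cdet (n : nat) (M : nat -> nat -> C) : C :=
  match n with
  | O => RtoC 1
  | S n' =>
      sum_n_m (fun i : nat =>
        Cmult (Cmult (RtoC ((-1) ^ i)) (M O i))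
              (cdet n' (fun r c => M (S r) (if Nat.ltb c i then c else S c))))
        0 n'
  end.

(* coefficient of eta_j : dP_j/(1-P_j) at block starts, dP_j/P_j otherwise *)
Definition eta_coef (ns : list nat) (xs : list C) (j : nat) (u : nat -> R) : C :=
  if is_start ns j then Cinv (Cminus (RtoC 1) (Pj ns xs j u))
  else Cinv (Pj ns xs j u).

(* Pullback of Omega = eta_1 /\ ... /\ eta_w under u |-> v, written as
   density(u) du_1 /\ ... /\ du_w:
   density = (prod_j coef_j) * det (dP_j / du_i)_{j,i}. *)
Definition Omega_density (ns : list nat) (xs : list C) (u : nat -> R) : C :=
  Cmult (cprod (fun j => eta_coef ns xs j u) 1 (weight ns))
        (cdet (weight ns) (fun r c => pderiv (Pj ns xs (S r)) u (S c))).

Fixpoint cube_int (w : nat) (F : (nat -> R) -> C) : C :=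
  match w with
  | O => F (fun _ => 0)
  | S w' => RInt (V := C_R_CompleteNormedModule)
              (fun t => cube_int w' (fun u => F (upd u (S w') t))) 0 1
  end.

(* Expand the integrand into geometric series.  Let U_i be the product of the coordinates of
   the i-th block and Q_i = x_i U_i Q_{i+1} (so Q_i = P_{N_{i-1}+1}).  Since the integral of
   (u_1 ... u_n)^(k-1) over [0,1]^n is 1/k^n, the partial sum of Li over k_m <= K is the
   integral of the polynomial T_K = sum_{k_1 < ... < k_m <= K} prod_i x_i^k_i U_i^(k_i - 1).
   Summing the nested geometric series, T_K converges uniformly on the cube, at the rate r^K
   with r = max |x_i|, to D = prod_i x_i Q_{i+1} / (1 - Q_i); uniform limits commute with
   iterated Riemann integrals.  On the other side, P_j only depends on u_j, ..., u_w, so the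
   Jacobian of u |-> P is triangular with diagonal entries c_j P_{j+1}; inside a block the
   factors P_{j+1} / P_j telescope and the density of the pulled-back form is exactly D. *)

From Stdlib Require Import Reals Arith List Lia Lra FunctionalExtensionality.
From Coquelicot Require Import Coquelicot.
Open Scope R_scope.

Local Notation CR := C_R_CompleteNormedModule.

(* Equations produced by [sum_n_m] live in [AbelianMonoid.sort C_AbelianMonoid], where [ring]
   does not recognize [C]. *)
Ltac C_ring := match goal with |- @eq _ ?a ?b => change (@eq C a b); ring end.

(** * Riemann integrals of complex functions on [0,1] *)

Lemma Cmod_minus_norm (a b : C) : Cmod (a - b)%C = norm (K := R_AbsRing) (V := CR) (minus a b).
Proof. exact (Cmod_norm (minus a b)). Qed.

Lemma is_RInt_RtoC (f : R -> R) (a b l : R) :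
  is_RInt f a b l -> is_RInt (V := CR) (fun t => RtoC (f t)) a b (RtoC l).
Proof.
  intros Hf. apply (is_RInt_fct_extend_pair (U := R_NormedModule) (V := R_NormedModule)); simpl.
  - exact Hf.
  - pose proof (is_RInt_const (V := R_NormedModule) a b 0) as H0.
    rewrite (scal_zero_r (V := R_NormedModule)) in H0. exact H0.
Qed.

Lemma is_RInt_Cmult_l (f : R -> C) (a b : R) (c l : C) :
  is_RInt (V := CR) f a b l -> is_RInt (V := CR) (fun t => (c * f t)%C) a b (c * l)%C.
Proof.
  intros Hf.
  pose proof (is_RInt_fct_extend_fst (U := R_NormedModule) (V := R_NormedModule) f a b l Hf) as Hre.
  pose proof (is_RInt_fct_extend_snd (U := R_NormedModule) (V := R_NormedModule) f a b l Hf) as Him.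
  destruct c as [c1 c2], l as [l1 l2]; simpl in Hre, Him.
  apply (is_RInt_fct_extend_pair (U := R_NormedModule) (V := R_NormedModule)); simpl.
  - apply (is_RInt_ext (fun t => scal c1 (fst (f t)) + scal (- c2) (snd (f t)))).
    { intros t _. unfold scal; simpl; unfold mult; simpl. ring. }
    replace (c1 * l1 - c2 * l2) with (scal c1 l1 + scal (- c2) l2)
      by (unfold scal; simpl; unfold mult; simpl; ring).
    apply (is_RInt_plus (V := R_NormedModule) _ _ a b);
      apply (is_RInt_scal (V := R_NormedModule)); assumption.
  - apply (is_RInt_ext (fun t => scal c1 (snd (f t)) + scal c2 (fst (f t)))).
    { intros t _. unfold scal; simpl; unfold mult; simpl. ring. }
    replace (c1 * l2 + c2 * l1) with (scal c1 l2 + scal c2 l1)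
      by (unfold scal; simpl; unfold mult; simpl; ring).
    apply (is_RInt_plus (V := R_NormedModule) _ _ a b);
      apply (is_RInt_scal (V := R_NormedModule)); assumption.
Qed.

Lemma is_RInt_C_const (c : C) : is_RInt (V := CR) (fun _ => c) 0 1 c.
Proof.
  pose proof (is_RInt_const (V := CR) 0 1 c) as Hc.
  rewrite Rminus_0_r, (scal_one (V := CR)) in Hc. exact Hc.
Qed.

Definition restrict01 (f : R -> C) (t : R) : C :=
  if Rlt_dec 0 t then if Rlt_dec t 1 then f t else RtoC 0 else RtoC 0.

Lemma restrict01_in (f : R -> C) (t : R) : 0 < t < 1 -> restrict01 f t = f t.
Proof.
  intros [H0 H1]. unfold restrict01.
  destruct (Rlt_dec 0 t); destruct (Rlt_dec t 1); tauto.
Qed.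

Lemma is_RInt_ext_open01 (f g : R -> C) (l : C) :
  (forall t, 0 < t < 1 -> f t = g t) -> is_RInt (V := CR) f 0 1 l -> is_RInt (V := CR) g 0 1 l.
Proof.
  intros Hfg. apply is_RInt_ext. intros t Ht.
  rewrite Rmin_left, Rmax_right in Ht by lra. auto.
Qed.

(* [filterlim_RInt] needs uniform convergence on all of [R]; [restrict01] makes the bound on
   (0,1) global. *)
Lemma is_RInt_uniform_limit (g : nat -> R -> C) (h : R -> C) (v : nat -> C) (e : nat -> R) :
  (forall K, is_RInt (V := CR) (g K) 0 1 (v K)) ->
  (forall K t, 0 < t < 1 -> Cmod (g K t - h t)%C <= e K) ->
  is_lim_seq e 0 ->
  exists I, is_RInt (V := CR) h 0 1 I /\ forall K, Cmod (v K - I)%C <= e K.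
Proof.
  intros Hg Hbound He.
  assert (He0 : forall K, 0 <= e K).
  { intros K. eapply Rle_trans; [apply Cmod_ge_0 | apply (Hbound K (1 / 2)); lra]. }
  assert (Hdist : forall K t, norm (K := R_AbsRing) (V := CR)
                    (minus (restrict01 (g K) t) (restrict01 h t)) <= e K).
  { intros K t. rewrite <- Cmod_minus_norm. unfold restrict01.
    destruct (Rlt_dec 0 t), (Rlt_dec t 1); try (apply Hbound; lra).
    all: unfold Cminus; rewrite Cplus_opp_r, Cmod_0; apply He0. }
  assert (Hlim : filterlim (fun K => restrict01 (g K)) eventually
                   (locally (T := fct_UniformSpace R CR) (restrict01 h))).
  { intros P [eps HP].
    destruct (proj2 (is_lim_seq_spec e 0) He (pos_div_2 eps)) as [N HN].
    exists N. intros K HK. apply HP. intros t.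
    apply (norm_compat1 (V := CR)). eapply Rle_lt_trans; [apply Hdist |].
    specialize (HN K HK). rewrite Rminus_0_r, Rabs_pos_eq in HN by auto.
    destruct eps as [eps Heps]; simpl in *; lra. }
  destruct (filterlim_RInt (V := CR) (fun K => restrict01 (g K)) 0 1 eventually _
              (restrict01 h) v) as [I [HvI HI]].
  { intros K. apply (is_RInt_ext_open01 (g K)); [| apply Hg].
    intros; symmetry; apply restrict01_in; auto. }
  { exact Hlim. }
  exists I. split.
  - apply (is_RInt_ext_open01 (restrict01 h)); [apply restrict01_in | exact HI].
  - intros K. rewrite Cmod_minus_norm.
    apply (norm_RInt_le (V := CR) (fun t => minus (restrict01 (g K) t) (restrict01 h t))
             (fun _ => e K) 0 1); [lra | intros; apply Hdist | | ].
    + apply (is_RInt_minus (V := CR)); [| exact HI].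
      apply (is_RInt_ext_open01 (g K)); [intros; symmetry; apply restrict01_in; auto | apply Hg].
    + pose proof (is_RInt_const (V := R_NormedModule) 0 1 (e K)) as Hc.
      rewrite Rminus_0_r, (scal_one (V := R_NormedModule)) in Hc. exact Hc.
Qed.

(** * Iterated integrals over coordinate boxes *)

Fixpoint iter_int (l : list nat) (F : (nat -> R) -> C) (u0 : nat -> R) : C :=
  match l with
  | nil => F u0
  | i :: l' => RInt (V := CR) (fun t => iter_int l' F (upd u0 i t)) 0 1
  end.

(* [RInt] is junk on non-integrable functions, so the existence of all inner integrals is
   tracked separately. *)
Fixpoint is_iter_int (l : list nat) (F : (nat -> R) -> C) (u0 : nat -> R) (v : C) : Prop :=
  match l with
  | nil => F u0 = v
  | i :: l' => exists g : R -> C,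
      (forall t, 0 < t < 1 -> is_iter_int l' F (upd u0 i t) (g t)) /\ is_RInt (V := CR) g 0 1 v
  end.

Fixpoint in_box (l : list nat) (u0 u : nat -> R) : Prop :=
  match l with
  | nil => u = u0
  | i :: l' => exists t, 0 < t < 1 /\ in_box l' (upd u0 i t) u
  end.

Lemma iter_int_unique l F u0 v : is_iter_int l F u0 v -> iter_int l F u0 = v.
Proof.
  revert u0 v; induction l as [| i l IH]; intros u0 v; simpl; auto.
  intros [g [Hg Hv]]. apply (is_RInt_unique (V := CR)).
  apply (is_RInt_ext_open01 g); auto. intros t Ht. symmetry. apply IH, Hg, Ht.
Qed.

Lemma is_iter_int_iter_int l F u0 v : is_iter_int l F u0 v -> is_iter_int l F u0 (iter_int l F u0).
Proof. intros H. rewrite (iter_int_unique _ _ _ _ H). exact H. Qed.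

Lemma is_iter_int_cons_canonical i l F u0 v :
  is_iter_int (i :: l) F u0 v ->
  is_RInt (V := CR) (fun t => iter_int l F (upd u0 i t)) 0 1 v /\
  forall t, 0 < t < 1 -> is_iter_int l F (upd u0 i t) (iter_int l F (upd u0 i t)).
Proof.
  intros [g [Hg Hv]]. split.
  - apply (is_RInt_ext_open01 g); auto. intros t Ht. symmetry. apply iter_int_unique, Hg, Ht.
  - intros t Ht. apply (is_iter_int_iter_int _ _ _ _ (Hg t Ht)).
Qed.

Lemma in_box_out l u0 u j : in_box l u0 u -> ~ In j l -> u j = u0 j.
Proof.
  revert u0; induction l as [| i l IH]; intros u0; simpl.
  - intros ->. reflexivity.
  - intros [t [_ Hu]] Hj. rewrite (IH _ Hu) by tauto.
    unfold upd. destruct (Nat.eqb_spec j i); [subst; tauto | reflexivity].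
Qed.

Lemma in_box_in l u0 u j : in_box l u0 u -> In j l -> 0 < u j < 1.
Proof.
  revert u0; induction l as [| i l IH]; intros u0; simpl; [tauto |].
  intros [t [Ht Hu]] Hj.
  destruct (in_dec Nat.eq_dec j l) as [Hin | Hout]; [exact (IH _ Hu Hin) |].
  destruct Hj as [<- | Hj]; [| tauto].
  rewrite (in_box_out _ _ _ _ Hu Hout). unfold upd. rewrite Nat.eqb_refl. exact Ht.
Qed.

Lemma iter_int_ext l F G u0 :
  (forall u, in_box l u0 u -> F u = G u) -> iter_int l F u0 = iter_int l G u0.
Proof.
  revert u0; induction l as [| i l IH]; intros u0 H; simpl.
  - apply H. reflexivity.
  - apply (RInt_ext (V := CR)). intros t Ht. rewrite Rmin_left, Rmax_right in Ht by lra.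
    apply IH. intros u Hu. apply H. exists t. auto.
Qed.

Lemma is_iter_int_ext l F G u0 v :
  (forall u, in_box l u0 u -> F u = G u) -> is_iter_int l F u0 v -> is_iter_int l G u0 v.
Proof.
  revert u0 v; induction l as [| i l IH]; intros u0 v H; simpl.
  - intros <-. symmetry. apply H. reflexivity.
  - intros [g [Hg Hv]]. exists g. split; auto.
    intros t Ht. apply (IH _ _ (fun u Hu => H u (ex_intro _ t (conj Ht Hu))) (Hg t Ht)).
Qed.

Lemma is_iter_int_const l u0 (c : C) : is_iter_int l (fun _ => c) u0 c.
Proof.
  revert u0; induction l as [| i l IH]; intros u0; simpl; auto.
  exists (fun _ => c). split; auto. apply is_RInt_C_const.
Qed.

Lemma is_iter_int_Cmult_l l F u0 v (c : C) :
  is_iter_int l F u0 v -> is_iter_int l (fun u => (c * F u)%C) u0 (c * v)%C.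
Proof.
  revert u0 v; induction l as [| i l IH]; intros u0 v; simpl.
  - intros <-. reflexivity.
  - intros [g [Hg Hv]]. exists (fun t => (c * g t)%C). split.
    + intros t Ht. apply IH, Hg, Ht.
    + apply is_RInt_Cmult_l, Hv.
Qed.

Lemma is_iter_int_plus l F G u0 v w :
  is_iter_int l F u0 v -> is_iter_int l G u0 w ->
  is_iter_int l (fun u => (F u + G u)%C) u0 (v + w)%C.
Proof.
  revert u0 v w; induction l as [| i l IH]; intros u0 v w; simpl.
  - intros <- <-. reflexivity.
  - intros [f [Hf Hv]] [g [Hg Hw]]. exists (fun t => (f t + g t)%C). split.
    + intros t Ht. apply IH; auto.
    + apply (is_RInt_plus (V := CR)); assumption.
Qed.

Lemma is_iter_int_sum l (F : nat -> (nat -> R) -> C) u0 (v : nat -> C) n m :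
  (forall k, (n <= k <= m)%nat -> is_iter_int l (F k) u0 (v k)) ->
  is_iter_int l (fun u => sum_n_m (fun k => F k u) n m) u0 (sum_n_m v n m).
Proof.
  intros H. destruct (le_lt_dec n m) as [Hnm | Hmn].
  - replace m with (n + (m - n))%nat in * by lia. clear Hnm.
    induction (m - n)%nat as [| d IHd].
    + rewrite Nat.add_0_r in *. rewrite sum_n_n.
      apply (is_iter_int_ext _ (F n)); [intros; rewrite sum_n_n; reflexivity | apply H; lia].
    + replace (n + S d)%nat with (S (n + d)) in * by lia.
      rewrite sum_n_Sm by lia.
      apply (is_iter_int_ext _ (fun u => (sum_n_m (fun k => F k u) n (n + d) + F (S (n + d)) u)%C)).
      { intros u _. rewrite sum_n_Sm by lia. reflexivity. }
      apply is_iter_int_plus; [apply IHd; intros; apply H | apply H]; lia.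
  - rewrite sum_n_m_zero by lia.
    apply (is_iter_int_ext _ (fun _ => zero)); [intros; rewrite sum_n_m_zero by lia; reflexivity |].
    apply is_iter_int_const.
Qed.

Lemma is_iter_int_app l1 l2 F G u0 v :
  (forall u, in_box l1 u0 u -> is_iter_int l2 F u (G u)) -> is_iter_int l1 G u0 v ->
  is_iter_int (l1 ++ l2) F u0 v.
Proof.
  revert u0 v; induction l1 as [| i l1 IH]; intros u0 v HFG; simpl.
  - intros <-. apply HFG. reflexivity.
  - intros [g [Hg Hv]]. exists g. split; auto.
    intros t Ht. apply (IH _ _ (fun u Hu => HFG u (ex_intro _ t (conj Ht Hu))) (Hg t Ht)).
Qed.

Lemma is_iter_int_uniform_limit l u0 (FK : nat -> (nat -> R) -> C) F (v : nat -> C) (e : nat -> R) :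
  (forall K, is_iter_int l (FK K) u0 (v K)) ->
  (forall K u, in_box l u0 u -> Cmod (FK K u - F u)%C <= e K) ->
  is_lim_seq e 0 ->
  exists I, is_iter_int l F u0 I /\ forall K, Cmod (v K - I)%C <= e K.
Proof.
  revert u0 v; induction l as [| i l IH]; intros u0 v Hv Hbound He.
  - exists (F u0). split; [reflexivity |]. intros K. rewrite <- (Hv K). apply Hbound. reflexivity.
  - assert (Hslice : forall t, 0 < t < 1 ->
              is_iter_int l F (upd u0 i t) (iter_int l F (upd u0 i t)) /\
              forall K, Cmod (iter_int l (FK K) (upd u0 i t) - iter_int l F (upd u0 i t))%C <= e K).
    { intros t Ht.
      destruct (IH (upd u0 i t) (fun K => iter_int l (FK K) (upd u0 i t))) as [I [HI HIK]]; auto.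
      - intros K. apply (proj2 (is_iter_int_cons_canonical _ _ _ _ _ (Hv K)) t Ht).
      - intros K u Hu. apply Hbound. exists t. auto.
      - rewrite (iter_int_unique _ _ _ _ HI). auto. }
    destruct (is_RInt_uniform_limit (fun K t => iter_int l (FK K) (upd u0 i t))
                (fun t => iter_int l F (upd u0 i t)) v e) as [I [HI HvI]]; auto.
    + intros K. apply (proj1 (is_iter_int_cons_canonical _ _ _ _ _ (Hv K))).
    + intros K t Ht. apply (proj2 (Hslice t Ht)).
    + exists I. split; auto. exists (fun t => iter_int l F (upd u0 i t)). split; auto.
      intros t Ht. apply (proj1 (Hslice t Ht)).
Qed.

(** * The unit cube and the integral of a monomial *)

(* Decreasing, like the nesting of [cube_int]: the outermost integral is over the last
   coordinate. *)
Fixpoint coords_desc (o n : nat) : list nat :=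
  match n with
  | O => nil
  | S n' => (o + S n')%nat :: coords_desc o n'
  end.

Lemma coords_desc_add o n m : coords_desc o (n + m) = coords_desc (o + n) m ++ coords_desc o n.
Proof.
  induction m as [| m IH]; simpl.
  - rewrite Nat.add_0_r. reflexivity.
  - rewrite Nat.add_succ_r. simpl. rewrite IH. f_equal. lia.
Qed.

Lemma In_coords_desc o n j : In j (coords_desc o n) <-> (o < j <= o + n)%nat.
Proof.
  induction n as [| n IH]; simpl; [lia |].
  rewrite IH. lia.
Qed.

Lemma upd_comm u i j s t : i <> j -> upd (upd u i s) j t = upd (upd u j t) i s.
Proof.
  intros Hij. apply functional_extensionality. intros k. unfold upd.
  destruct (Nat.eqb_spec k j), (Nat.eqb_spec k i); congruence.
Qed.

Lemma iter_int_upd l F u0 k t :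
  ~ In k l -> iter_int l (fun u => F (upd u k t)) u0 = iter_int l F (upd u0 k t).
Proof.
  revert u0; induction l as [| i l IH]; intros u0 Hk; simpl; [reflexivity |].
  f_equal. apply functional_extensionality. intros s.
  rewrite IH, upd_comm; simpl in Hk; tauto.
Qed.

Lemma cube_int_iter_int w F : cube_int w F = iter_int (coords_desc 0 w) F (fun _ => 0).
Proof.
  revert F; induction w as [| w IH]; intros F; simpl; [reflexivity |].
  f_equal. apply functional_extensionality. intros t.
  rewrite IH. apply iter_int_upd. rewrite In_coords_desc. lia.
Qed.

Lemma in_cube_bounds w u :
  in_box (coords_desc 0 w) (fun _ => 0) u ->
  (forall j, 0 <= u j <= 1) /\ (forall j, (0 < j <= w)%nat -> 0 < u j).
Proof.
  intros Hu. split.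
  - intros j. destruct (in_dec Nat.eq_dec j (coords_desc 0 w)) as [Hin | Hout].
    + pose proof (in_box_in _ _ _ _ Hu Hin). lra.
    + rewrite (in_box_out _ _ _ _ Hu Hout). lra.
  - intros j Hj. apply (in_box_in _ _ _ _ Hu). apply In_coords_desc. lia.
Qed.

Fixpoint block_prod (u : nat -> R) (o n : nat) : R :=
  match n with
  | O => 1
  | S n' => u (o + S n')%nat * block_prod u o n'
  end.

Lemma block_prod_ext u u' o n :
  (forall j, (o < j <= o + n)%nat -> u j = u' j) -> block_prod u o n = block_prod u' o n.
Proof.
  induction n as [| n IH]; intros H; simpl; [reflexivity |].
  rewrite H, IH; [reflexivity | intros; apply H |]; lia.
Qed.

Lemma block_prod_bounds u o n : (forall j, 0 <= u j <= 1) -> 0 <= block_prod u o n <= 1.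
Proof.
  intros Hu. induction n as [| n IH]; simpl; [lra |].
  pose proof (Hu (o + S n)%nat).
  split; [apply Rmult_le_pos | rewrite <- (Rmult_1_l 1); apply Rmult_le_compat]; lra.
Qed.

Lemma is_RInt_pow_scal (k : nat) (c : R) :
  (1 <= k)%nat -> is_RInt (fun t => t ^ (k - 1) * c) 0 1 (c / INR k).
Proof.
  intros Hk.
  pose proof (is_RInt_scal _ 0 1 c _ (is_RInt_pow 0 1 (k - 1))) as H.
  replace (S (k - 1)) with k in H by lia. rewrite pow1, pow_i in H by lia.
  apply (is_RInt_ext (fun t => scal c (t ^ (k - 1)))).
  - intros t _. unfold scal; simpl; unfold mult; simpl. ring.
  - replace (c / INR k) with (scal c (1 / INR k - 0 / INR k)); [exact H |].
    unfold scal; simpl; unfold mult; simpl. unfold Rdiv. ring.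
Qed.

Lemma is_iter_int_block_monomial n o k u0 :
  (1 <= k)%nat ->
  is_iter_int (coords_desc o n) (fun u => RtoC (block_prod u o n ^ (k - 1))) u0
    (RtoC (/ INR k ^ n)).
Proof.
  intros Hk. assert (Hk0 : INR k <> 0) by (apply not_0_INR; lia).
  revert u0; induction n as [| n IH]; intros u0; simpl.
  - rewrite pow1. f_equal. field.
  - exists (fun t => RtoC (t ^ (k - 1) * / INR k ^ n)). split.
    + intros t Ht. rewrite RtoC_mult.
      apply (is_iter_int_ext _
               (fun u => (RtoC (t ^ (k - 1)) * RtoC (block_prod u o n ^ (k - 1)))%C)).
      * intros u Hu. simpl. rewrite (in_box_out _ _ _ _ Hu).
        -- unfold upd. rewrite Nat.eqb_refl, Rpow_mult_distr, RtoC_mult. reflexivity.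
        -- rewrite In_coords_desc. lia.
      * apply is_iter_int_Cmult_l, IH.
    + apply is_RInt_RtoC.
      replace (/ (INR k * INR k ^ n)) with (/ INR k ^ n / INR k)
        by (field; split; [apply pow_nonzero |]; auto).
      apply is_RInt_pow_scal, Hk.
Qed.

(** * The truncated series as an integral *)

(* [trunc_integrand ns xs o a K u] is [T_K] with the extra constraint [a < k_1], for blocks of
   coordinates starting after [o]. *)
Fixpoint trunc_integrand (ns : list nat) (xs : list C) (o a K : nat) (u : nat -> R) : C :=
  match ns, xs with
  | n :: ns', x :: xs' =>
      sum_n_m (fun k => (pow_n x k * RtoC (block_prod u o n ^ (k - 1))
                         * trunc_integrand ns' xs' (o + n) k K u)%C) (S a) K
  | _, _ => RtoC 1
  end.

Lemma trunc_integrand_ext ns xs o a K u u' :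
  (forall j, (o < j)%nat -> u j = u' j) ->
  trunc_integrand ns xs o a K u = trunc_integrand ns xs o a K u'.
Proof.
  revert xs o a; induction ns as [| n ns IH]; intros [| x xs] o a Hu; simpl; auto.
  apply sum_n_m_ext. intros k.
  rewrite (block_prod_ext u u' o n), (IH xs (o + n)%nat k) by (intros; apply Hu; lia).
  reflexivity.
Qed.

Lemma is_iter_int_trunc_integrand ns xs o a K u0 :
  is_iter_int (coords_desc o (weight ns)) (trunc_integrand ns xs o a K) u0 (Li_trunc ns xs a K).
Proof.
  revert xs o a u0; induction ns as [| n ns IH]; intros [| x xs] o a u0.
  - reflexivity.
  - reflexivity.
  - exact (is_iter_int_const _ u0 (RtoC 1)).
  - unfold weight; simpl list_sum. rewrite coords_desc_add. simpl Li_trunc.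
    apply (is_iter_int_ext _
             (fun u => sum_n_m (fun k => (pow_n x k * RtoC (block_prod u o n ^ (k - 1))
                                          * trunc_integrand ns xs (o + n) k K u)%C) (S a) K));
      [reflexivity |].
    apply (is_iter_int_app _ _ _
             (fun u => sum_n_m (fun k => (pow_n x k / RtoC (INR k ^ n)
                                           * trunc_integrand ns xs (o + n) k K u)%C) (S a) K)).
    + intros u _. apply is_iter_int_sum. intros k Hk.
      assert (Hk0 : INR k ^ n <> 0) by (apply pow_nonzero, not_0_INR; lia).
      apply (is_iter_int_ext _ (fun u' => ((pow_n x k * trunc_integrand ns xs (o + n) k K u)
                                           * RtoC (block_prod u' o n ^ (k - 1)))%C)).
      * intros u' Hu'. rewrite (trunc_integrand_ext ns xs (o + n) k K u' u); [ring |].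
        intros j Hj. apply (in_box_out _ _ _ _ Hu'). rewrite In_coords_desc. lia.
      * replace (pow_n x k / RtoC (INR k ^ n) * trunc_integrand ns xs (o + n) k K u)%C
          with ((pow_n x k * trunc_integrand ns xs (o + n) k K u) * RtoC (/ INR k ^ n))%C
          by (rewrite RtoC_inv by exact Hk0; unfold Cdiv; ring).
        apply is_iter_int_Cmult_l, is_iter_int_block_monomial. lia.
    + apply is_iter_int_sum. intros k _. apply is_iter_int_Cmult_l, IH.
Qed.

(** * Uniform convergence of the integrands *)

Lemma Cmod_pow_n (x : C) k : Cmod (pow_n x k) = Cmod x ^ k.
Proof. induction k as [| k IH]; simpl; [apply Cmod_1 | rewrite <- IH; apply Cmod_mult]. Qed.

Lemma pow_n_Cmult (x y : C) k : pow_n (x * y)%C k = (pow_n x k * pow_n y k)%C.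
Proof.
  induction k as [| k IH]; simpl; [symmetry; apply Cmult_1_l |].
  rewrite IH. change (mult ?a ?b) with (a * b)%C. ring.
Qed.

Lemma pow_n_RtoC (r : R) k : pow_n (RtoC r) k = RtoC (r ^ k).
Proof. induction k as [| k IH]; simpl; [reflexivity | rewrite IH, RtoC_mult; reflexivity]. Qed.

Lemma sum_n_m_Cminus (f g : nat -> C) n m :
  (sum_n_m (fun k => f k - g k)%C n m : C) = (sum_n_m f n m - sum_n_m g n m)%C.
Proof.
  destruct (le_lt_dec n m) as [Hnm | Hmn].
  - induction Hnm as [| m Hnm IH].
    + rewrite !sum_n_n. reflexivity.
    + rewrite !sum_n_Sm, IH by lia. change (plus ?a ?b) with (a + b)%C. ring.
  - rewrite !sum_n_m_zero by lia. change (@zero C_AbelianMonoid) with (RtoC 0). ring.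
Qed.

Lemma pow_le_1 (x : R) n : 0 <= x <= 1 -> x ^ n <= 1.
Proof. intros Hx. rewrite <- (pow1 n). apply pow_incr. exact Hx. Qed.

Lemma Rle_pow_le_1 (x : R) m n : 0 <= x <= 1 -> (m <= n)%nat -> x ^ n <= x ^ m.
Proof.
  intros Hx Hmn. replace n with (m + (n - m))%nat by lia. rewrite pow_add.
  pose proof (pow_le x m (proj1 Hx)). pose proof (pow_le_1 x (n - m) Hx).
  pose proof (pow_le x (n - m) (proj1 Hx)). nra.
Qed.

Lemma Cmod_sum_n_m_le (f : nat -> C) n m :
  Cmod (sum_n_m f n m) <= sum_n_m (fun k => Cmod (f k)) n m.
Proof.
  rewrite Cmod_norm.
  eapply Rle_trans; [apply (norm_sum_n_m (K := R_AbsRing) (V := C_R_NormedModule)) |].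
  apply sum_n_m_le. intros k. rewrite <- Cmod_norm. lra.
Qed.

Lemma sum_n_m_pow_le (r : R) n m : 0 <= r < 1 -> sum_n_m (fun k => r ^ k) n m <= / (1 - r).
Proof.
  intros Hr. assert (Hinv : 0 < / (1 - r)) by (apply Rinv_0_lt_compat; lra).
  destruct (le_lt_dec n m) as [Hnm | Hmn].
  - assert (Htel : (1 - r) * sum_n_m (fun k => r ^ k) n m = r ^ n - r ^ S m).
    { induction Hnm as [| m Hnm IH].
      - rewrite sum_n_n. simpl. ring.
      - rewrite sum_n_Sm by lia. change (plus ?a ?b) with (a + b).
        rewrite Rmult_plus_distr_l, IH. simpl. ring. }
    apply Rmult_le_reg_l with (1 - r); [lra |]. rewrite Htel, Rinv_r by lra.
    pose proof (pow_le r (S m)). pose proof (pow_le_1 r n ltac:(lra)). lra.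
  - rewrite sum_n_m_zero by lia. change zero with 0. lra.
Qed.

Lemma geometric_tail (q c : C) a K :
  (1 - q)%C <> RtoC 0 ->
  (c * pow_n q a / (1 - q))%C
  = (sum_n_m (fun k => c * pow_n q (k - 1)) (S a) K + c * pow_n q (max a K) / (1 - q))%C.
Proof.
  intros Hq. destruct (le_lt_dec a K) as [HaK | HKa].
  - induction HaK as [| K HaK IH].
    + rewrite sum_n_m_zero, Nat.max_id by lia. change (@zero C_AbelianMonoid) with (RtoC 0). ring.
    + rewrite IH, sum_n_Sm by lia. change (plus ?x ?y) with (x + y)%C.
      rewrite !Nat.max_r by lia. replace (S K - 1)%nat with K by lia. simpl.
      change (mult ?x ?y) with (x * y)%C. field. exact Hq.
  - rewrite sum_n_m_zero, Nat.max_l by lia. change (@zero C_AbelianMonoid) with (RtoC 0). ring.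
Qed.

(* [qprod] is [Q_1] and [limit_density] is [D], for blocks of coordinates starting after [o]. *)
Fixpoint qprod (ns : list nat) (xs : list C) (o : nat) (u : nat -> R) : C :=
  match ns, xs with
  | n :: ns', x :: xs' => (x * RtoC (block_prod u o n) * qprod ns' xs' (o + n) u)%C
  | _, _ => RtoC 1
  end.

Fixpoint limit_density (ns : list nat) (xs : list C) (o : nat) (u : nat -> R) : C :=
  match ns, xs with
  | n :: ns', x :: xs' =>
      let q := qprod ns' xs' (o + n) u in
      (x * q * limit_density ns' xs' (o + n) u / (1 - x * RtoC (block_prod u o n) * q))%C
  | _, _ => RtoC 1
  end.

Lemma Cmod_1_minus_ge (z : C) : 1 - Cmod z <= Cmod (1 - z)%C.
Proof.
  pose proof (Cmod_triangle (1 - z)%C z) as H.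
  replace (1 - z + z)%C with (RtoC 1) in H by ring. rewrite Cmod_1 in H. lra.
Qed.

Lemma geometric_block_split (x q d : C) (U : R) (T : nat -> C) a K :
  let Q := (x * RtoC U * q)%C in
  (1 - Q)%C <> RtoC 0 ->
  (sum_n_m (fun k => pow_n x k * RtoC (U ^ (k - 1)) * T k) (S a) K
   - pow_n Q a * (x * q * d / (1 - Q)))%C
  = (sum_n_m (fun k => pow_n x k * RtoC (U ^ (k - 1)) * (T k - pow_n q k * d)) (S a) K
     - x * q * d * pow_n Q (max a K) / (1 - Q))%C.
Proof.
  intros Q HQ1.
  assert (Hterm : forall k, (1 <= k)%nat ->
            (pow_n x k * RtoC (U ^ (k - 1)) * (pow_n q k * d))%C = (x * q * d * pow_n Q (k - 1))%C).
  { intros k Hk. unfold Q. rewrite !pow_n_Cmult, pow_n_RtoC.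
    replace k with (S (k - 1)) at 1 3 by lia. simpl. change (mult ?y ?z) with (y * z)%C. ring. }
  replace (pow_n Q a * (x * q * d / (1 - Q)))%C with (x * q * d * pow_n Q a / (1 - Q))%C
    by (unfold Cdiv; ring).
  rewrite (geometric_tail Q (x * q * d) a K HQ1).
  rewrite (sum_n_m_ext_loc (fun k => x * q * d * pow_n Q (k - 1))%C
             (fun k => pow_n x k * RtoC (U ^ (k - 1)) * (pow_n q k * d))%C)
    by (intros k Hk; symmetry; apply Hterm; lia).
  rewrite (sum_n_m_ext (fun k => pow_n x k * RtoC (U ^ (k - 1)) * (T k - pow_n q k * d))%C
             (fun k => pow_n x k * RtoC (U ^ (k - 1)) * T k
                       - pow_n x k * RtoC (U ^ (k - 1)) * (pow_n q k * d))%C)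
    by (intros; C_ring).
  rewrite sum_n_m_Cminus. ring.
Qed.

Section UniformBound.

Variables (r : R) (u : nat -> R).
Hypothesis Hr : 0 <= r < 1.
Hypothesis Hu : forall j, 0 <= u j <= 1.

Lemma block_term_bound (x q : C) o n :
  Cmod x <= r -> Cmod q <= 1 -> Cmod (x * RtoC (block_prod u o n) * q)%C <= r.
Proof.
  intros Hx Hq. pose proof (block_prod_bounds u o n Hu).
  rewrite !Cmod_mult, Cmod_R, Rabs_pos_eq by lra.
  pose proof (Cmod_ge_0 x). pose proof (Cmod_ge_0 q).
  assert (Cmod x * block_prod u o n <= r) by nra. nra.
Qed.

Lemma qprod_bound ns xs o : List.Forall (fun x => Cmod x <= r) xs -> Cmod (qprod ns xs o u) <= 1.
Proof.
  revert xs o; induction ns as [| n ns IH]; intros [| x xs] o Hxs; simpl; try (rewrite Cmod_1; lra).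
  apply List.Forall_cons_iff in Hxs as [Hx Hxs'].
  eapply Rle_trans; [apply block_term_bound; auto | lra].
Qed.

Lemma one_minus_block_term_neq0 (x q : C) o n :
  Cmod x <= r -> Cmod q <= 1 -> (1 - x * RtoC (block_prod u o n) * q)%C <> RtoC 0.
Proof.
  intros Hx Hq H0. pose proof (Cmod_1_minus_ge (x * RtoC (block_prod u o n) * q)%C).
  pose proof (block_term_bound x q o n Hx Hq). rewrite H0, Cmod_0 in *. lra.
Qed.

Lemma limit_density_bound ns xs o :
  List.Forall (fun x => Cmod x <= r) xs ->
  Cmod (limit_density ns xs o u) <= (/ (1 - r)) ^ length ns.
Proof.
  assert (Hinv : 1 <= / (1 - r)) by (rewrite <- Rinv_1; apply Rinv_le_contravar; lra).
  revert xs o; induction ns as [| n ns IH]; intros [| x xs] o Hxs; simpl limit_density;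
    try (rewrite Cmod_1; apply pow_R1_Rle; lra).
  apply List.Forall_cons_iff in Hxs as [Hx Hxs']. simpl length. cbn [pow].
  pose proof (qprod_bound ns xs (o + n) Hxs') as Hq.
  pose proof (Cmod_1_minus_ge (x * RtoC (block_prod u o n) * qprod ns xs (o + n) u)%C).
  pose proof (block_term_bound x _ o n Hx Hq).
  rewrite Cmod_div by (apply one_minus_block_term_neq0; auto). rewrite !Cmod_mult.
  pose proof (IH xs (o + n)%nat Hxs'). pose proof (Cmod_ge_0 x).
  pose proof (Cmod_ge_0 (qprod ns xs (o + n) u)).
  pose proof (Cmod_ge_0 (limit_density ns xs (o + n) u)).
  unfold Rdiv. rewrite Rmult_comm.
  apply Rmult_le_compat; [apply Rlt_le, Rinv_0_lt_compat; lra | | apply Rinv_le_contravar; lra |].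
  - apply Rmult_le_pos; [apply Rmult_le_pos |]; auto.
  - replace ((/ (1 - r)) ^ length ns) with (1 * 1 * (/ (1 - r)) ^ length ns) by ring.
    apply Rmult_le_compat; try apply Rmult_le_pos; auto. apply Rmult_le_compat; lra.
Qed.

Lemma geometric_remainder_bound (x q d Q : C) m K (dmax : R) :
  Cmod x <= r -> Cmod q <= 1 -> Cmod d <= dmax -> Cmod Q <= r -> (K <= m)%nat ->
  Cmod (x * q * d * pow_n Q m / (1 - Q))%C <= dmax * / (1 - r) * r ^ K.
Proof.
  intros Hx Hq Hd HQ HKm. pose proof (Cmod_1_minus_ge Q).
  assert (HQ1 : (1 - Q)%C <> RtoC 0) by (intros H0; rewrite H0, Cmod_0 in *; lra).
  rewrite Cmod_div by exact HQ1. rewrite !Cmod_mult, Cmod_pow_n.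
  pose proof (Cmod_ge_0 x). pose proof (Cmod_ge_0 q).
  pose proof (Cmod_ge_0 d). pose proof (Cmod_ge_0 Q).
  assert (Hpow : Cmod Q ^ m <= r ^ K).
  { eapply Rle_trans; [apply pow_incr; split; eauto |]. apply Rle_pow_le_1; lra || lia. }
  assert (Hxq : 0 <= Cmod x * Cmod q <= 1) by (split; nra).
  assert (Hxqd : 0 <= Cmod x * Cmod q * Cmod d <= dmax) by (split; nra).
  replace (dmax * / (1 - r) * r ^ K) with (dmax * r ^ K * / (1 - r)) by ring.
  unfold Rdiv. apply Rmult_le_compat.
  - apply Rmult_le_pos; [lra | apply pow_le; auto].
  - apply Rlt_le, Rinv_0_lt_compat. lra.
  - apply Rmult_le_compat; [lra | apply pow_le | lra |]; auto.
  - apply Rinv_le_contravar; lra.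
Qed.

Lemma geometric_block_error (x q d : C) (T : nat -> C) o n a K (c dmax : R) :
  Cmod x <= r -> Cmod q <= 1 -> Cmod d <= dmax -> 0 <= c ->
  (forall k, Cmod (T k - pow_n q k * d)%C <= c * r ^ K) ->
  let Q := (x * RtoC (block_prod u o n) * q)%C in
  Cmod (sum_n_m (fun k => pow_n x k * RtoC (block_prod u o n ^ (k - 1)) * T k) (S a) K
        - pow_n Q a * (x * q * d / (1 - Q)))%C
  <= (c + dmax) * / (1 - r) * r ^ K.
Proof.
  intros Hx Hq Hd Hc HT Q.
  pose proof (block_prod_bounds u o n Hu) as HU. set (U := block_prod u o n) in *.
  assert (HQ : Cmod Q <= r) by (apply block_term_bound; auto).
  assert (HQ1 : (1 - Q)%C <> RtoC 0) by (apply one_minus_block_term_neq0; auto).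
  assert (Hsum :
    Cmod (sum_n_m (fun k => pow_n x k * RtoC (U ^ (k - 1)) * (T k - pow_n q k * d)) (S a) K)%C
                 <= / (1 - r) * (c * r ^ K)).
  { eapply Rle_trans; [apply Cmod_sum_n_m_le |].
    eapply Rle_trans; [apply (sum_n_m_le _ (fun k => r ^ k * (c * r ^ K))) |].
    - intros k. rewrite !Cmod_mult, Cmod_pow_n, Cmod_R, Rabs_pos_eq by (apply pow_le; lra).
      pose proof (pow_incr (Cmod x) r k (conj (Cmod_ge_0 x) Hx)).
      pose proof (pow_le_1 U (k - 1) HU). pose proof (pow_le U (k - 1) (proj1 HU)).
      pose proof (pow_le (Cmod x) k (Cmod_ge_0 x)). pose proof (HT k).
      pose proof (Cmod_ge_0 (T k - pow_n q k * d)%C).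
      replace (r ^ k * (c * r ^ K)) with (r ^ k * 1 * (c * r ^ K)) by ring.
      apply Rmult_le_compat; try apply Rmult_le_pos; auto. apply Rmult_le_compat; auto.
    - rewrite (sum_n_m_mult_r (K := R_Ring) (c * r ^ K) (fun k => r ^ k)).
      apply Rmult_le_compat_r; [apply Rmult_le_pos; [| apply pow_le]; lra |].
      apply sum_n_m_pow_le, Hr. }
  assert (Htail := geometric_remainder_bound x q d Q (max a K) K dmax Hx Hq Hd HQ ltac:(lia)).
  pose proof (geometric_block_split x q d U T a K HQ1) as Hsplit. fold Q in Hsplit.
  rewrite Hsplit. unfold Cminus at 1.
  eapply Rle_trans; [apply Cmod_triangle |]. rewrite Cmod_opp. nra.
Qed.

Lemma trunc_integrand_error ns xs o a K :
  List.Forall (fun x => Cmod x <= r) xs ->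
  Cmod (trunc_integrand ns xs o a K u - pow_n (qprod ns xs o u) a * limit_density ns xs o u)%C
  <= INR (length ns) * (/ (1 - r)) ^ length ns * r ^ K.
Proof.
  assert (HM : 0 < / (1 - r)) by (apply Rinv_0_lt_compat; lra).
  assert (Hempty : forall a m, Cmod (1 - pow_n (RtoC 1) a * 1)%C <= INR m * (/ (1 - r)) ^ m * r ^ K).
  { intros a' m. rewrite pow_n_RtoC, pow1, Cmult_1_l. unfold Cminus. rewrite Cplus_opp_r, Cmod_0.
    apply Rmult_le_pos; [apply Rmult_le_pos; [apply pos_INR | apply pow_le] | apply pow_le]; lra. }
  revert xs o a; induction ns as [| n ns IH]; intros [| x xs] o a Hxs; try apply Hempty.
  apply List.Forall_cons_iff in Hxs as [Hx Hxs'].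
  eapply Rle_trans.
  - apply (geometric_block_error x _ _ (fun k => trunc_integrand ns xs (o + n) k K u) o n a K
             (INR (length ns) * (/ (1 - r)) ^ length ns) ((/ (1 - r)) ^ length ns)); auto.
    + apply qprod_bound, Hxs'.
    + apply limit_density_bound, Hxs'.
    + apply Rmult_le_pos; [apply pos_INR | apply pow_le; lra].
  - simpl length. rewrite S_INR. cbn [pow]. lra.
Qed.

End UniformBound.

(** * The density of the pulled-back form *)

Lemma cprod_ext (f g : nat -> C) a n :
  (forall j, (a <= j < a + n)%nat -> f j = g j) -> cprod f a n = cprod g a n.
Proof.
  revert a; induction n as [| n IH]; intros a H; simpl; [reflexivity |].
  rewrite H, IH; [reflexivity | intros; apply H |]; lia.
Qed.

Lemma cprod_shift (f : nat -> C) a n : cprod f (S a) n = cprod (fun j => f (S j)) a n.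
Proof. revert a; induction n as [| n IH]; intros a; simpl; [| rewrite IH]; reflexivity. Qed.

Lemma cprod_Cmult (f g : nat -> C) a n :
  cprod (fun j => f j * g j)%C a n = (cprod f a n * cprod g a n)%C.
Proof. revert a; induction n as [| n IH]; intros a; simpl; [ring | rewrite IH; ring]. Qed.

Lemma cprod_add (f : nat -> C) a n m : cprod f a (n + m) = (cprod f a n * cprod f (a + n) m)%C.
Proof.
  revert a; induction n as [| n IH]; intros a; simpl.
  - rewrite Nat.add_0_r. ring.
  - rewrite IH, Nat.add_succ_r, Nat.add_succ_l. ring.
Qed.

Lemma cprod_recurrence (f p : nat -> C) a n :
  (forall j, (a <= j < a + n)%nat -> p j = (f j * p (S j))%C) ->
  p a = (cprod f a n * p (a + n)%nat)%C.
Proof.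
  revert a; induction n as [| n IH]; intros a H; simpl.
  - rewrite Nat.add_0_r. ring.
  - rewrite H at 1 by lia. rewrite IH by (intros; apply H; lia).
    rewrite Nat.add_succ_r, Nat.add_succ_l. ring.
Qed.

Lemma cprod_telescope (f g p : nat -> C) a n :
  (forall j, (a <= j < a + n)%nat -> (f j * p j)%C = (g j * p (S j))%C) ->
  (cprod f a n * p a)%C = (cprod g a n * p (a + n)%nat)%C.
Proof.
  revert a; induction n as [| n IH]; intros a H; simpl.
  - rewrite Nat.add_0_r. ring.
  - transitivity (cprod f (S a) n * (f a * p a))%C; [ring |].
    rewrite H by lia.
    transitivity (g a * (cprod f (S a) n * p (S a)))%C; [ring |].
    rewrite IH by (intros; apply H; lia). rewrite Nat.add_succ_r, Nat.add_succ_l. ring.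
Qed.

Lemma cdet_S n M :
  cdet (S n) M
  = sum_n_m (fun i => (RtoC ((-1) ^ i) * M O i
                       * cdet n (fun r c => M (S r) (if Nat.ltb c i then c else S c)))%C) 0 n.
Proof. reflexivity. Qed.

Lemma cdet_first_col_zero n M :
  (forall r, (r <= n)%nat -> M r O = RtoC 0) -> cdet (S n) M = RtoC 0.
Proof.
  revert M; induction n as [| n IH]; intros M H; rewrite cdet_S.
  - rewrite sum_n_n, H by lia. ring.
  - transitivity (sum_n_m (fun _ => RtoC 0) 0 (S n)); [| exact (sum_n_m_const_zero 0 (S n))].
    apply sum_n_m_ext_loc.
    intros [| i] Hi.
    + rewrite H by lia. C_ring.
    + rewrite IH; [C_ring |].
      intros r Hr. apply H. lia.
Qed.

Lemma cdet_upper_triangular n M :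
  (forall r c, (c < r < n)%nat -> M r c = RtoC 0) -> cdet n M = cprod (fun r => M r r) 0 n.
Proof.
  revert M; induction n as [| [| n] IH]; intros M H.
  - reflexivity.
  - simpl. rewrite sum_n_n. simpl. ring.
  - rewrite cdet_S, sum_Sn_m by lia.
    rewrite (sum_n_m_ext_loc _ (fun _ => RtoC 0)), (sum_n_m_const_zero (G := C_AbelianMonoid)).
    + rewrite IH by (intros r c Hrc; simpl; apply H; lia).
      change (cprod (fun r => M r r) 0 (S (S n))) with (M O O * cprod (fun r => M r r) 1 (S n))%C.
      rewrite cprod_shift. change (plus ?a ?b) with (a + b)%C.
      change (fun r : nat => M (S r) (if r <? 0 then r else S r)) with (fun r => M (S r) (S r)).
      change (@zero C_AbelianMonoid) with (RtoC 0). simpl pow. C_ring.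
    + intros [| i] Hi; [lia |].
      rewrite cdet_first_col_zero; [C_ring |].
      intros r Hr. simpl. apply H. lia.
Qed.

Lemma Pj_upd_below ns xs j u k t : (k < j)%nat -> Pj ns xs j (upd u k t) = Pj ns xs j u.
Proof.
  intros Hkj. unfold Pj. apply cprod_ext. intros i Hi.
  unfold vcoord, upd. destruct (Nat.eqb_spec i k); [lia | reflexivity].
Qed.

Lemma Pj_step ns xs j u :
  (j <= weight ns)%nat -> Pj ns xs j u = (vcoord ns xs u j * Pj ns xs (S j) u)%C.
Proof.
  intros Hj. unfold Pj.
  replace (weight ns + 1 - j)%nat with (S (weight ns + 1 - S j)) by lia. reflexivity.
Qed.

Lemma pderiv_Pj_below ns xs j u k : (k < j)%nat -> pderiv (Pj ns xs j) u k = RtoC 0.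
Proof.
  intros Hkj. unfold pderiv.
  rewrite (Derive_ext _ (fun _ => fst (Pj ns xs j u))),
    (Derive_ext (fun t => snd _) (fun _ => snd (Pj ns xs j u)))
    by (intros; rewrite Pj_upd_below; auto).
  rewrite !Derive_const. reflexivity.
Qed.

Lemma pderiv_Pj_diag ns xs j u :
  (j <= weight ns)%nat -> pderiv (Pj ns xs j) u j = (cmult ns xs j * Pj ns xs (S j) u)%C.
Proof.
  intros Hj. unfold pderiv.
  set (z := (cmult ns xs j * Pj ns xs (S j) u)%C).
  assert (Hlin : forall t, Pj ns xs j (upd u j t) = (RtoC t * z)%C).
  { intros t. rewrite Pj_step, Pj_upd_below by lia.
    unfold z, vcoord, upd. rewrite Nat.eqb_refl. ring. }
  rewrite (Derive_ext _ (fun t => t * fst z)), (Derive_ext (fun t => snd _) (fun t => t * snd z))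
    by (intros t; rewrite Hlin; destruct z; simpl; ring).
  rewrite !Derive_scal_l, Derive_id, !Rmult_1_l. destruct z. reflexivity.
Qed.

(* For [c := cmult ns xs], [s := is_start ns] and [P := fun j => Pj ns xs j u]: the
   coefficient of [eta_j] times [dP_j/du_j]. *)
Definition eta_factor (c : nat -> C) (s : nat -> bool) (P : nat -> C) (j : nat) : C :=
  ((if s j then / (1 - P j) else / P j) * (c j * P (S j)))%C.

Lemma Omega_density_prod ns xs u :
  Omega_density ns xs u
  = cprod (eta_factor (cmult ns xs) (is_start ns) (fun j => Pj ns xs j u)) 1 (weight ns).
Proof.
  change (cprod (eta_factor (cmult ns xs) (is_start ns) (fun j => Pj ns xs j u)) 1 (weight ns))
    with (cprod (fun j => eta_coef ns xs j u * (cmult ns xs j * Pj ns xs (S j) u))%C 1 (weight ns)).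
  unfold Omega_density. rewrite cdet_upper_triangular by (intros; apply pderiv_Pj_below; lia).
  rewrite cprod_Cmult. f_equal. rewrite cprod_shift. apply cprod_ext.
  intros j Hj. apply pderiv_Pj_diag. lia.
Qed.

Lemma cprod_one a n : cprod (fun _ => RtoC 1) a n = RtoC 1.
Proof. revert a; induction n as [| n IH]; intros a; simpl; [reflexivity | rewrite IH; ring]. Qed.

Lemma cprod_RtoC_block_prod u o n : cprod (fun j => RtoC (u j)) (S o) n = RtoC (block_prod u o n).
Proof.
  induction n as [| n IH]; [reflexivity |].
  transitivity (cprod (fun j => RtoC (u j)) (S o) (n + 1)); [f_equal; lia |].
  rewrite cprod_add, IH. simpl. rewrite RtoC_mult, Nat.add_succ_r. ring.
Qed.

Lemma cprod_last_factor (c : nat -> C) (x : C) o n :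
  (1 <= n)%nat ->
  (forall j, (o < j <= o + n)%nat -> c j = if Nat.eqb j (o + n) then x else RtoC 1) ->
  cprod c (S o) n = x.
Proof.
  intros Hn Hc. replace n with (n - 1 + 1)%nat at 1 by lia. rewrite cprod_add.
  rewrite (cprod_ext c (fun _ => RtoC 1)), cprod_one.
  - simpl. replace (S (o + (n - 1))) with (o + n)%nat by lia.
    rewrite Hc, Nat.eqb_refl by lia. ring.
  - intros j Hj. rewrite Hc by lia. destruct (Nat.eqb_spec j (o + n)); [lia | reflexivity].
Qed.

(* Also true for [z = 0], since [/ 0 = 0]. *)
Lemma Cinv_scaled_cancel (t : R) (z : C) : t <> 0 -> (/ (RtoC t * z) * z * (RtoC t * z))%C = z.
Proof.
  intros Ht. destruct (Ceq_dec z (RtoC 0)) as [-> | Hz]; [ring |].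
  field. split; [exact Hz | intros H; apply Ht; injection H; auto].
Qed.

Lemma cmult_aux_below ns xs o j :
  List.Forall (fun n => (0 < n)%nat) ns -> (j <= o)%nat -> cmult_aux ns xs o j = RtoC 1.
Proof.
  revert xs o; induction ns as [| n ns IH]; intros [| x xs] o Hns Hj; simpl; auto.
  apply List.Forall_cons_iff in Hns as [Hn Hns].
  destruct (Nat.eqb_spec j (o + n)); [lia |]. apply IH; auto. lia.
Qed.

Lemma is_start_aux_below ns o j :
  List.Forall (fun n => (0 < n)%nat) ns -> (j <= o)%nat -> is_start_aux ns o j = false.
Proof.
  revert o; induction ns as [| n ns IH]; intros o Hns Hj; simpl; auto.
  apply List.Forall_cons_iff in Hns as [Hn Hns].
  destruct (Nat.eqb_spec j (o + 1)); [lia |]. apply IH; auto. lia.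
Qed.

Section Blocks.

Variables (c : nat -> C) (s : nat -> bool) (P : nat -> C) (u : nat -> R) (w : nat).
Hypothesis HP : forall j, (0 < j <= w)%nat -> P j = (c j * RtoC (u j) * P (S j))%C.
Hypothesis HPend : P (S w) = RtoC 1.
Hypothesis Hu : forall j, (0 < j <= w)%nat -> u j <> 0.

Lemma eta_product_block o n x :
  (1 <= n)%nat -> (o + n <= w)%nat ->
  (forall j, (o < j <= o + n)%nat -> c j = if Nat.eqb j (o + n) then x else RtoC 1) ->
  (forall j, (o < j <= o + n)%nat -> s j = Nat.eqb j (S o)) ->
  P (S o) = (x * RtoC (block_prod u o n) * P (S (o + n)))%C /\
  cprod (eta_factor c s P) (S o) n = (x * P (S (o + n)) / (1 - P (S o)))%C.
Proof.
  intros Hn Hw Hc Hs. split.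
  - rewrite (cprod_recurrence (fun j => c j * RtoC (u j))%C P (S o) n) by (intros; apply HP; lia).
    rewrite cprod_Cmult, (cprod_last_factor c x), cprod_RtoC_block_prod by assumption. reflexivity.
  - destruct n as [| n]; [lia |]. cbn [cprod].
    assert (Htel := cprod_telescope (eta_factor c s P) c P (S (S o)) n).
    replace (S (S o) + n)%nat with (S (o + S n)) in Htel by lia.
    unfold eta_factor at 1. rewrite Hs, Nat.eqb_refl by lia.
    transitivity
      (/ (1 - P (S o)) * c (S o) * (cprod (eta_factor c s P) (S (S o)) n * P (S (S o))))%C;
      [ring |].
    rewrite Htel.
    + rewrite <- (cprod_last_factor c x o (S n)) by (auto; lia). cbn [cprod]. unfold Cdiv. ring.
    + intros j Hj. unfold eta_factor. rewrite Hs by lia. destruct (Nat.eqb_spec j (S o)); [lia |].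
      rewrite (HP j) by lia.
      replace (c j * RtoC (u j) * P (S j))%C with (RtoC (u j) * (c j * P (S j)))%C by ring.
      rewrite Cinv_scaled_cancel by (apply Hu; lia). ring.
Qed.

Lemma eta_product_blocks ns xs o :
  List.Forall (fun n => (0 < n)%nat) ns -> length xs = length ns -> (o + weight ns)%nat = w ->
  (forall j, (o < j)%nat -> c j = cmult_aux ns xs o j) ->
  (forall j, (o < j)%nat -> s j = is_start_aux ns o j) ->
  P (S o) = qprod ns xs o u /\ cprod (eta_factor c s P) (S o) (weight ns) = limit_density ns xs o u.
Proof.
  revert xs o; induction ns as [| n ns IH]; intros [| x xs] o Hns Hlen Hw Hc Hs; try discriminate.
  - cbn in Hw |- *. rewrite Nat.add_0_r in Hw. subst o. auto.
  - apply List.Forall_cons_iff in Hns as [Hn Hns]. injection Hlen as Hlen.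
    change (weight (n :: ns)) with (n + weight ns)%nat in *.
    assert (Hctail : forall j, (o + n < j)%nat -> c j = cmult_aux ns xs (o + n) j).
    { intros j Hj. rewrite Hc by lia. simpl. destruct (Nat.eqb_spec j (o + n)); [lia | reflexivity]. }
    assert (Hstail : forall j, (o + n < j)%nat -> s j = is_start_aux ns (o + n) j).
    { intros j Hj. rewrite Hs by lia. simpl. destruct (Nat.eqb_spec j (o + 1)); [lia | reflexivity]. }
    assert (Hcblock : forall j, (o < j <= o + n)%nat -> c j = if Nat.eqb j (o + n) then x else RtoC 1).
    { intros j Hj. rewrite Hc by lia. simpl.
      destruct (Nat.eqb j (o + n)); [reflexivity | apply cmult_aux_below; auto; lia]. }
    assert (Hsblock : forall j, (o < j <= o + n)%nat -> s j = Nat.eqb j (S o)).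
    { intros j Hj. rewrite Hs by lia. simpl. rewrite is_start_aux_below by (auto; lia).
      rewrite Bool.orb_false_r, Nat.add_1_r. reflexivity. }
    destruct (IH xs (o + n)%nat Hns Hlen ltac:(lia) Hctail Hstail) as [HPtail Hdtail].
    destruct (eta_product_block o n x ltac:(lia) ltac:(lia) Hcblock Hsblock) as [HPblock Hdblock].
    rewrite HPtail in HPblock, Hdblock. split; [exact HPblock |].
    rewrite cprod_add, Hdblock. replace (S o + n)%nat with (S (o + n)) by lia.
    rewrite Hdtail, HPblock. simpl. unfold Cdiv. ring.
Qed.

End Blocks.

Lemma Omega_density_eq_limit_density ns xs u :
  List.Forall (fun n => (0 < n)%nat) ns -> length xs = length ns ->
  (forall j, (0 < j <= weight ns)%nat -> u j <> 0) ->
  Omega_density ns xs u = limit_density ns xs 0 u.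
Proof.
  intros Hns Hlen Hu. rewrite Omega_density_prod.
  apply (eta_product_blocks _ _ _ u (weight ns)); auto.
  - intros j Hj. rewrite Pj_step by lia. reflexivity.
  - unfold Pj. replace (weight ns + 1 - S (weight ns))%nat with O by lia. reflexivity.
Qed.

(** * Passing to the limit *)

Lemma common_bound_lt_1 (xs : list C) :
  List.Forall (fun x => Cmod x < 1) xs ->
  exists r, 0 <= r < 1 /\ List.Forall (fun x => Cmod x <= r) xs.
Proof.
  induction xs as [| x xs IH]; intros Hxs.
  - exists 0. split; [lra | constructor].
  - apply List.Forall_cons_iff in Hxs as [Hx Hxs]. destruct (IH Hxs) as [r [Hr Hxsr]].
    exists (Rmax (Cmod x) r). pose proof (Rmax_r (Cmod x) r).
    split; [split; [lra | apply Rmax_lub_lt; lra] |].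
    constructor; [apply Rmax_l |].
    eapply List.Forall_impl; [| exact Hxsr]. intros y Hy. eapply Rle_trans; [exact Hy | apply Rmax_r].
Qed.

Lemma filterlim_Cmod_bound (v : nat -> C) (l : C) (e : nat -> R) :
  (forall K, Cmod (v K - l)%C <= e K) -> is_lim_seq e 0 -> filterlim v eventually (locally l).
Proof.
  intros Hv He P [eps HP].
  destruct (proj2 (is_lim_seq_spec e 0) He eps) as [N HN].
  exists N. intros K HK. apply HP. apply (norm_compat1 (V := C_R_NormedModule)).
  rewrite <- Cmod_norm. specialize (HN K HK). rewrite Rminus_0_r in HN.
  eapply Rle_lt_trans; [apply Hv | eapply Rle_lt_trans; [apply Rle_abs | exact HN]].
Qed.

Theorem lemma9p2 (ns : list nat) (xs : list C) :
  List.Forall (fun n => (0 < n)%nat) ns ->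
  List.length xs = List.length ns ->
  List.Forall (fun x => Cmod x < 1) xs ->
  is_Li ns xs (cube_int (weight ns) (Omega_density ns xs)).
Proof.
  intros Hns Hlen Hxs.
  destruct (common_bound_lt_1 xs Hxs) as [r [Hr Hxsr]].
  set (e K := INR (length ns) * (/ (1 - r)) ^ length ns * r ^ K).
  assert (He : is_lim_seq e 0).
  { replace (Finite 0) with (Rbar_mult (INR (length ns) * (/ (1 - r)) ^ length ns) 0)
      by (simpl; f_equal; ring).
    apply is_lim_seq_scal_l, is_lim_seq_geom. rewrite Rabs_pos_eq; lra. }
  destruct (is_iter_int_uniform_limit (coords_desc 0 (weight ns)) (fun _ => 0)
              (fun K => trunc_integrand ns xs 0 0 K) (limit_density ns xs 0)
              (fun K => Li_trunc ns xs 0 K) e) as [I [HI HLiI]]; auto.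
  - intros K. apply is_iter_int_trunc_integrand.
  - intros K u Hu. destruct (in_cube_bounds _ _ Hu) as [Hu01 _].
    pose proof (trunc_integrand_error r u Hr Hu01 ns xs 0 0 K Hxsr) as Herr.
    rewrite <- (Cmult_1_l (limit_density ns xs 0 u)). exact Herr.
  - replace (cube_int (weight ns) (Omega_density ns xs)) with I;
      [exact (filterlim_Cmod_bound _ _ e HLiI He) |].
    rewrite cube_int_iter_int, <- (iter_int_unique _ _ _ _ HI).
    apply iter_int_ext. intros u Hu. destruct (in_cube_bounds _ _ Hu) as [_ Hpos].
    symmetry. apply Omega_density_eq_limit_density; auto.
    intros j Hj. apply Rgt_not_eq, Hpos, Hj.
Qed.
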